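(* Let $n_1,n_2,n_3$ be integers with $3\le n_1,n_2\le n_3$ and let $W$ be a basic landmark system for $K(\mathbf{n})$. Then $W$ is a resolving set of $K(\mathbf{n})$ if and only if the landmark graph $\mathcal{G}(W)$ contains no bad $4$-cycle, no plain hex, and no shark teeth.
   Context: $K(\mathbf{n})=K_{n_1}\times K_{n_2}\times K_{n_3}$ is the direct product of complete graphs: its vertices are the triples $(x_1,x_2,x_3)$ with $1\le x_i\le n_i$, and two vertices are adjacent iff they differ in every coordinate. $d$ denotes graph distance. A set $W$ of vertices is resolving if for every two distinct vertices $x,y\notin W$ there is $w\in W$ with $d(x,w)\ne d(y,w)$. Landmark graph: for $W$ a set of vertices, let $W_{i,a}=\{w\in W: w_i=a\}$. The landmark graph $\mathcal{G}(W)$ is the hypergraph with vertex set $W$ whose hyperedges are the nonempty sets $W_{i,a}$ ($W_{i,a}$ has color $i$). A hyperedge with exactly two vertices is a stick, with at least three vertices poofy. Basic landmark system: $W$ such that (1) $W_{i,a}\neq\emptyset$ for all $i\in\{1,2,3\}$, $1\le a\le n_i$; (2) $|W_{i,a}|\ge 2$ for all such $i,a$; (3) $|W_{i,a}\cap W_{j,b}|\le 1$ whenever $i\ne j$. Bad $4$-cycle: distinct $w_1,w_2,w_3,w_4\in W$ and $\{i,j,k\}=\{1,2,3\}$ such that $\{w_1,w_2\}$ and $\{w_3,w_4\}$ are both hyperedges of color $i$, $w_2,w_3$ lie in a common hyperedge of color $j$, and $w_4,w_1$ lie in a common hyperedge of color $k$. Plain hex: distinct $w_1,\dots,w_6\in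 W$ and an ordering $(i,j,k)$ of $\{1,2,3\}$ such that $\{w_1,w_2\},\{w_4,w_5\}$ are hyperedges of color $i$, $\{w_2,w_3\},\{w_5,w_6\}$ are hyperedges of color $j$, and $\{w_3,w_4\},\{w_6,w_1\}$ are hyperedges of color $k$. Rainbow $2$-$2$-triangle: distinct $w_1,w_2,w_3\in W$ and $\{i,j,k\}=\{1,2,3\}$ such that $\{w_1,w_2\}$ is a hyperedge of color $i$, $\{w_2,w_3\}$ is a hyperedge of color $j$, and $w_1,w_3$ (the termini) lie in a common hyperedge of color $k$. Shark teeth: two rainbow $2$-$2$-triangles with the same colors $i,j,k$ on disjoint vertex sets whose four termini all belong to the same poofy hyperedge of color $k$. *)

From mathcomp Require Import all_boot.
Set Implicit Arguments. Unset Strict Implicit. Unset Printing Implicit Defensive.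

Fixpoint walkn (T : finType) (e : rel T) (k : nat) (x y : T) : bool :=
  match k with
  | 0 => x == y
  | k'.+1 => [exists z, e x z && walkn e k' z y]
  end.

(* Shortest-path distance: least k < #|T| admitting a walk of length k
   (a shortest walk, if any, has length < #|T|); returns #|T| (acting as
   "infinity") if y is unreachable from x. *)
Definition gdist (T : finType) (e : rel T) (x y : T) : nat :=
  find (fun k => walkn e k x y) (iota 0 #|T|).

Section Kn.
Variables n1 n2 n3 : nat.

(* Vertices of K(n) = K_{n1} x K_{n2} x K_{n3}; coordinates are 0-based,
   colors 1,2,3 are represented by i : 'I_3 = {0,1,2}. *)
Definition KV := ('I_n1 * 'I_n2 * 'I_n3)%type.

Definition coord (i : 'I_3) (v : KV) : nat :=
  match val i with
  | 0 => nat_of_ord v.1.1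
  | 1 => nat_of_ord v.1.2
  | _ => nat_of_ord v.2
  end.

Definition dim (i : 'I_3) : nat :=
  match val i with 0 => n1 | 1 => n2 | _ => n3 end.

(* Direct product of complete graphs: adjacent iff differ in every coordinate. *)
Definition Kadj : rel KV := fun x y => [forall i : 'I_3, coord i x != coord i y].

Definition Kdist (x y : KV) : nat := gdist Kadj x y.

Definition resolving (W : {set KV}) : Prop :=
  forall x y : KV, x != y -> x \notin W -> y \notin W ->
    exists2 w, w \in W & Kdist x w <> Kdist y w.

Definition Wia (W : {set KV}) (i : 'I_3) (a : nat) : {set KV} :=
  [set w in W | coord i w == a].

Definition basic_landmark (W : {set KV}) : Prop :=
  [/\ (forall (i : 'I_3) a, a < dim i -> Wia W i a != set0),
      (forall (i : 'I_3) a, a < dim i -> 2 <= #|Wia W i a|) &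
      (forall (i j : 'I_3) a b, i != j -> #|Wia W i a :&: Wia W j b| <= 1)].

Definition stick (W : {set KV}) (i : 'I_3) (u v : KV) : Prop :=
  exists a, Wia W i a = [set u; v].

Definition common (W : {set KV}) (i : 'I_3) (u v : KV) : Prop :=
  exists a, u \in Wia W i a /\ v \in Wia W i a.

Definition colors3 (i j k : 'I_3) : Prop := [/\ i != j, j != k & i != k].

Definition bad4cycle (W : {set KV}) : Prop :=
  exists (w1 w2 w3 w4 : KV) (i j k : 'I_3),
    uniq [:: w1; w2; w3; w4] /\ colors3 i j k /\
    stick W i w1 w2 /\ stick W i w3 w4 /\
    common W j w2 w3 /\ common W k w4 w1.

Definition plainhex (W : {set KV}) : Prop :=
  exists (w1 w2 w3 w4 w5 w6 : KV) (i j k : 'I_3),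
    uniq [:: w1; w2; w3; w4; w5; w6] /\ colors3 i j k /\
    stick W i w1 w2 /\ stick W i w4 w5 /\
    stick W j w2 w3 /\ stick W j w5 w6 /\
    stick W k w3 w4 /\ stick W k w6 w1.

Definition rainbow22 (W : {set KV}) (i j k : 'I_3) (w1 w2 w3 : KV) : Prop :=
  uniq [:: w1; w2; w3] /\ colors3 i j k /\
  stick W i w1 w2 /\ stick W j w2 w3 /\ common W k w1 w3.

Definition sharkteeth (W : {set KV}) : Prop :=
  exists (w1 w2 w3 u1 u2 u3 : KV) (i j k : 'I_3),
    rainbow22 W i j k w1 w2 w3 /\ rainbow22 W i j k u1 u2 u3 /\
    uniq [:: w1; w2; w3; u1; u2; u3] /\
    exists a, 3 <= #|Wia W k a| /\
      [/\ w1 \in Wia W k a, w3 \in Wia W k a, u1 \in Wia W k a & u3 \in Wia W k a].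

End Kn.

From mathcomp Require Import all_boot zify.
Set Implicit Arguments. Unset Strict Implicit. Unset Printing Implicit Defensive.

(* In K(n) with all n_i >= 3, two distinct vertices are adjacent when they differ in
   every coordinate and otherwise have a common neighbour, so their distance is 1 or 2
   according as they share no coordinate or some coordinate.  Hence W fails to resolve
   two non-landmarks x, y exactly when W_{1,x_1} ∪ W_{2,x_2} ∪ W_{3,x_3} equals
   W_{1,y_1} ∪ W_{2,y_2} ∪ W_{3,y_3}.  If then x_i <> y_i, the hyperedge W_{i,x_i} is
   covered by W_{j,y_j} ∪ W_{k,y_k}, each of which meets it in at most one landmark, so
   it is a stick with one landmark in each.  According as x and y differ in one, two or
   three coordinates, these sticks form a bad 4-cycle, shark teeth or a plain hex;
   conversely, each of these configurations prescribes the coordinates of such a pair. *)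

Lemma set2_cover (T : finType) (A P Q : {set T}) :
  1 < #|A| -> A \subset P :|: Q -> #|A :&: P| <= 1 -> #|A :&: Q| <= 1 ->
  exists p q, [/\ A = [set p; q], p \in P, q \in Q & p != q].
Proof.
move=> A2 /setIidPl AU P1 Q1.
have AE : A = (A :&: P) :|: (A :&: Q) by rewrite -setIUr AU.
have AUle : #|A| <= #|A :&: P| + #|A :&: Q| by rewrite {1}AE; apply: leq_card_setU.
have /cards1P [p Pp] : #|A :&: P| == 1 by apply/eqP; lia.
have /cards1P [q Qq] : #|A :&: Q| == 1 by apply/eqP; lia.
have /setIP [_ pP] : p \in A :&: P by rewrite Pp set11.
have /setIP [_ qQ] : q \in A :&: Q by rewrite Qq set11.
have AE' : A = [set p; q] by rewrite AE Pp Qq.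
by exists p, q; split=> //; move: A2; rewrite AE' cards2; case: eqP.
Qed.

Lemma set2_mem (T : finType) (A : {set T}) p q : A = [set p; q] -> p \in A /\ q \in A.
Proof. by move=> ->; rewrite set21 set22. Qed.

Lemma walkn1 (T : finType) (e : rel T) x y : walkn e 1 x y = e x y.
Proof.
apply/existsP/idP => [[z /andP[exz /eqP <-]] // | exy].
by exists y; rewrite exy eqxx.
Qed.

Lemma avoid2 d a b : 2 < d -> exists c, [&& c < d, c != a & c != b].
Proof.
move=> d2; case: (boolP ((a != 0) && (b != 0))) => [/andP[a0 b0]|].
  by exists 0; rewrite !(eq_sym 0) a0 b0 andbT; lia.
case: (boolP ((a != 1) && (b != 1))) => [/andP[a1 b1]|].
  by exists 1; rewrite !(eq_sym 1) a1 b1 andbT; lia.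
by rewrite !negb_and !negbK => ? ?; exists 2; apply/and3P; split; lia.
Qed.

Definition i0 : 'I_3 := @Ordinal 3 0 isT.
Definition i1 : 'I_3 := @Ordinal 3 1 isT.
Definition i2 : 'I_3 := @Ordinal 3 2 isT.

Lemma ord3_cases (m : 'I_3) : m = i0 \/ m = i1 \/ m = i2.
Proof.
case: m => [[|[|[|m]]] lt_m3] //; [left | right; left | right; right];
  exact: val_inj.
Qed.

Lemma colors3_cover (i j k : 'I_3) : colors3 i j k -> forall m, m = i \/ m = j \/ m = k.
Proof.
case=> ij jk ik m.
by case: (ord3_cases i) (ord3_cases j) (ord3_cases k) (ord3_cases m) ij jk ik
  => [->|[->|->]] [->|[->|->]] [->|[->|->]] [->|[->|->]]; auto.
Qed.

Lemma colors3_swap (i j k : 'I_3) : colors3 i j k -> colors3 j i k.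
Proof. by case=> ij jk ik; split; rewrite // eq_sym. Qed.

Lemma colors3_rot (i j k : 'I_3) : colors3 i j k -> colors3 j k i.
Proof. by case=> ij jk ik; split; rewrite // eq_sym. Qed.

Lemma colors3_exists (k : 'I_3) : exists i j, colors3 i j k.
Proof.
by case: (ord3_cases k) => [->|[->|->]]; [exists i1, i2 | exists i0, i2 | exists i0, i1].
Qed.

Section Vertices.
Variables n1 n2 n3 : nat.
Local Notation T := (KV n1 n2 n3).
Local Notation dim := (dim n1 n2 n3).

Lemma coord_lt m (v : T) : coord m v < dim m.
Proof. by case: (ord3_cases m) => [->|[->|->]]; apply: ltn_ord. Qed.

Lemma coord_inj (u v : T) : (forall m, coord m u = coord m v) -> u = v.
Proof.
case: u v => [[a b] c] [[a' b'] c'] uv.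
by move: (uv i0) (uv i1) (uv i2); rewrite /coord /= => /val_inj-> /val_inj-> /val_inj->.
Qed.

Lemma colors3_coord_inj i j k (u v : T) : colors3 i j k ->
  coord i u = coord i v -> coord j u = coord j v -> coord k u = coord k v -> u = v.
Proof. by move=> c *; apply: coord_inj => m; case: (colors3_cover c m) => [->|[->|->]]. Qed.

Lemma exists_vertex (f : 'I_3 -> nat) : (forall m, f m < dim m) ->
  exists v : T, forall m, coord m v = f m.
Proof.
move=> f_lt; exists ((Ordinal (f_lt i0), Ordinal (f_lt i1)), Ordinal (f_lt i2)).
by move=> m; case: (ord3_cases m) => [->|[->|->]].
Qed.

Lemma exists_vertex3 i j k a b c : colors3 i j k ->
  a < dim i -> b < dim j -> c < dim k ->
  exists v : T, [/\ coord i v = a, coord j v = b & coord k v = c].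
Proof.
move=> col a_lt b_lt c_lt; case: (col) => ij jk ik.
pose f m := if m == i then a else if m == j then b else c.
have fi : f i = a by rewrite /f eqxx.
have fj : f j = b by rewrite /f eq_sym (negbTE ij) eqxx.
have fk : f k = c by rewrite /f eq_sym (negbTE ik) eq_sym (negbTE jk).
have f_lt m : f m < dim m by case: (colors3_cover col m) => [->|[->|->]]; rewrite ?fi ?fj ?fk.
have [v vf] := exists_vertex f_lt.
by exists v; rewrite !vf.
Qed.

Definition share (x w : T) := [exists m, coord m x == coord m w].

Hypotheses (n1_gt2 : 2 < n1) (n2_gt2 : 2 < n2) (n3_gt2 : 2 < n3).

Lemma Kadj_common (u v : T) : exists z, Kadj u z && Kadj z v.
Proof.
have dim_gt2 m : 2 < dim m by case: (ord3_cases m) => [->|[->|->]].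
pose f m := xchoose (avoid2 (coord m u) (coord m v) (dim_gt2 m)).
have /all_and3 [f_lt fu fv] m : [/\ f m < dim m, f m != coord m u & f m != coord m v].
  exact/and3P/(xchooseP (avoid2 _ _ (dim_gt2 m))).
have [z zf] := exists_vertex f_lt.
by exists z; apply/andP; split; apply/forallP => m; rewrite zf // eq_sym.
Qed.

Lemma share3 i j k (x w : T) : colors3 i j k ->
  share x w = [|| coord i x == coord i w, coord j x == coord j w | coord k x == coord k w].
Proof.
move=> c; apply/existsP/or3P => [[m] | [] xw]; [| by exists i | by exists j | by exists k].
by case: (colors3_cover c m) => [->|[->|->]] xw; [constructor 1 | constructor 2 | constructor 3].
Qed.

Lemma Kdist_neq (x w : T) : x != w -> Kdist x w = (share x w).+1.
Proof.
move=> xw; rewrite /Kdist /gdist.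
have [N ->] : exists N, #|{: T}| = N.+3.
  by exists (#|{: T}| - 3); rewrite /KV !card_prod !card_ord; nia.
have walk2 : walkn (@Kadj n1 n2 n3) 2 x w.
  have [z /andP[xz zw]] := Kadj_common x w.
  by apply/existsP; exists z; rewrite xz; apply/existsP; exists w; rewrite zw eqxx.
move: walk2; rewrite /= (negbTE xw) => ->.
have -> : [exists z, Kadj x z && (z == w)] = Kadj x w := walkn1 _ x w.
by rewrite /Kadj /share -negb_exists; case: [exists m, _].
Qed.

End Vertices.

Section Landmarks.
Variables (n1 n2 n3 : nat) (W : {set KV n1 n2 n3}).
Local Notation T := (KV n1 n2 n3).
Local Notation Wia := (Wia W).

Definition trace (x : T) : {set T} := [set w in W | share x w].

Definition twins (x y : T) : Prop :=
  [/\ x != y, x \notin W, y \notin W & trace x = trace y].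

Lemma resolvingP : 2 < n1 -> 2 < n2 -> 2 < n3 ->
  resolving W <-> forall x y, ~ twins x y.
Proof.
move=> n1_gt2 n2_gt2 n3_gt2.
have Kdist_trace x w : x \notin W -> w \in W -> Kdist x w = (w \in trace x).+1.
  by move=> xW wW; rewrite Kdist_neq ?inE ?wW //; apply: contraNneq xW => ->.
split=> [res x y [xy xW yW txy] | notwins x y xy xW yW].
  have [w wW] := res x y xy xW yW.
  by rewrite !Kdist_trace // txy.
have [w wW tw] : exists2 w, w \in W & (w \in trace x) != (w \in trace y).
  have : trace x != trace y by apply/eqP => txy; apply: (notwins x y); split.
  rewrite eqEsubset negb_and => /orP[] /subsetPn [w wx wy];
    by exists w; rewrite ?wx ?(negbTE wy) //; move: wx; rewrite inE => /andP[].
by exists w; rewrite // !Kdist_trace //; case: (w \in trace x) (w \in trace y) tw => [] [].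
Qed.

Lemma trace3 i j k (x : T) : colors3 i j k ->
  trace x = Wia i (coord i x) :|: Wia j (coord j x) :|: Wia k (coord k x).
Proof.
move=> c; apply/setP => w; rewrite !inE (share3 _ _ c) !(eq_sym (coord _ x)).
by rewrite -!andb_orr orbA.
Qed.

Lemma Wia_self (x : T) m a : x \in W -> coord m x = a -> x \in Wia m a.
Proof. by move=> xW <-; rewrite inE xW eqxx. Qed.

Lemma Wia_lt (w : T) m a : w \in Wia m a -> a < dim n1 n2 n3 m.
Proof. by rewrite inE => /andP [_ /eqP <-]; apply: coord_lt. Qed.

Lemma neq_Wia (v w : T) m a b : a != b -> v \in Wia m a -> w \in Wia m b -> v != w.
Proof.
move=> ab; rewrite !inE => /andP [_ /eqP va] /andP [_ /eqP wb].
by apply: contra_neq ab => vw; rewrite -va -wb vw.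
Qed.

Lemma Wia3_mem i j k (x w : T) : colors3 i j k ->
  w \in Wia i (coord i x) -> w \in Wia j (coord j x) -> w \in Wia k (coord k x) -> x \in W.
Proof.
move=> c; rewrite !inE => /andP [wW /eqP wi] /andP [_ /eqP wj] /andP [_ /eqP wk].
by rewrite -(colors3_coord_inj c wi wj wk).
Qed.

Hypothesis Wia_capW : forall i j a b, i != j -> #|Wia i a :&: Wia j b| <= 1.

Lemma Wia_cap_eq i j a b (u v : T) : i != j ->
  u \in Wia i a -> u \in Wia j b -> v \in Wia i a -> v \in Wia j b -> u = v.
Proof. by move=> ij ui uj vi vj; apply: (card_le1_eqP (Wia_capW a b ij)); apply/setIP. Qed.

Hypothesis Wia_card2 : forall i a, a < dim n1 n2 n3 i -> 1 < #|Wia i a|.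

Lemma trace_stick i j k (x y : T) : colors3 i j k -> trace x = trace y ->
  coord i x != coord i y -> exists p q, [/\ Wia i (coord i x) = [set p; q],
    p \in Wia j (coord j y), q \in Wia k (coord k y) & p != q].
Proof.
move=> c txy xy; case: (c) => ij _ ik.
apply: set2_cover; [exact/Wia_card2/coord_lt | | exact: Wia_capW | exact: Wia_capW].
apply/subsetP => w wi; have : w \in trace y by rewrite -txy (trace3 _ c) !in_setU wi.
rewrite (trace3 _ c) !in_setU -orbA => /orP [wi' | //].
by have := neq_Wia xy wi wi'; rewrite eqxx.
Qed.

Ltac uniq_clash U e := move: U; rewrite e /= !inE eqxx !(orbT, orTb) /= ?andbF.

Ltac uniq_of_neqs := rewrite /= !inE !negb_or; repeat (apply/andP; split); by [|rewrite eq_sym].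

Section Twins.
Variables x y : T.
Hypotheses (xW : x \notin W) (yW : y \notin W) (txy : trace x = trace y).
Local Notation X m := (Wia m (coord m x)).
Local Notation Y m := (Wia m (coord m y)).

Lemma bad4cycle_of_twins i j k : colors3 i j k -> coord i x != coord i y ->
  coord j x = coord j y -> coord k x = coord k y -> bad4cycle W.
Proof.
move=> c xyi xyj xyk.
have yxi : coord i y != coord i x by rewrite eq_sym.
have [u [v [Xi uj vk uv]]] := trace_stick c txy xyi.
have [u' [v' [Yi u'j v'k u'v']]] := trace_stick c (esym txy) yxi.
rewrite -xyj in uj; rewrite -xyk in vk.
have [ui vi] := set2_mem Xi.
have [u'i v'i] := set2_mem Yi.
have := neq_Wia xyi ui u'i; have := neq_Wia xyi ui v'i.
have := neq_Wia xyi vi u'i; have := neq_Wia xyi vi v'i => *.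
exists v, u, u', v', i, j, k; split; first by uniq_of_neqs.
split=> //; split; first by exists (coord i x); rewrite Xi setUC.
split; first by exists (coord i y).
by split; [exists (coord j x) | exists (coord k x)].
Qed.

Lemma sharkteeth_of_twins i j k : colors3 i j k -> coord i x != coord i y ->
  coord j x != coord j y -> coord k x = coord k y -> sharkteeth W.
Proof.
move=> c xyi xyj xyk; have c' := colors3_swap c; case: (c) => ij _ _.
have := xyi; have := xyj; rewrite !(eq_sym (coord _ x)) => yxj yxi.
have [p [q [Xi pj qk pq]]] := trace_stick c txy xyi.
have [r [s [Xj ri sk rs]]] := trace_stick c' txy xyj.
have [r' [s' [Yi r'j s'k r's']]] := trace_stick c (esym txy) yxi.
have [p' [q' [Yj p'i q'k p'q']]] := trace_stick c' (esym txy) yxj.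
rewrite -xyk in qk sk.
have [pi qi] := set2_mem Xi.
have [rj sj] := set2_mem Xj.
have [r'i s'i] := set2_mem Yi.
have [p'j q'j] := set2_mem Yj.
have ji : j != i by rewrite eq_sym.
have pp' : p = p' := Wia_cap_eq ij pi pj p'i p'j.
have rr' : r = r' := Wia_cap_eq ji rj ri r'j r'i.
subst p' r'.
have qq' : q != q'.
  by apply: contra_neq pq => qEq'; apply: (Wia_cap_eq ij pi pj qi); rewrite qEq'.
have ss' : s' != s.
  by apply: contra_neq rs => s'Es; apply: (Wia_cap_eq ji rj ri sj); rewrite -s'Es.
have qs : q != s.
  by apply: contraNneq xW => qEs; apply: (Wia3_mem c qi _ qk); rewrite qEs.
have q's' : q' != s'.
  by apply: contraNneq yW => q'Es'; apply: (Wia3_mem c s'i); [rewrite -q'Es' | rewrite -xyk].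
have := neq_Wia xyi qi s'i; have := neq_Wia xyi qi ri; have := neq_Wia xyi pi s'i.
have := neq_Wia xyi pi ri; have := neq_Wia xyj sj pj; have := neq_Wia xyj rj q'j.
have := neq_Wia xyj sj q'j => *.
exists q, p, q', s', r, s, i, j, k; split; last split; last split; first 2 last.
- by uniq_of_neqs.
- exists (coord k x); split; last by split.
  by apply/card_gt2P; exists q, q', s; split; split; rewrite // eq_sym.
- split; first by uniq_of_neqs.
  split=> //; split; first by exists (coord i x); rewrite Xi setUC.
  by split; [exists (coord j y) | exists (coord k x)].
- split; first by uniq_of_neqs.
  split=> //; split; first by exists (coord i y); rewrite Yi setUC.
  by split; [exists (coord j x) | exists (coord k x)].
Qed.

Lemma plainhex_of_twins i j k : colors3 i j k -> coord i x != coord i y ->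
  coord j x != coord j y -> coord k x != coord k y -> plainhex W.
Proof.
move=> c xyi xyj xyk; case: (c) => ij jk ik.
have cj := colors3_swap c; have ck := colors3_rot (colors3_rot c).
have := xyi; have := xyj; have := xyk; rewrite !(eq_sym (coord _ x)) => yxk yxj yxi.
have [aij [aik [Xi aijj aikk aij_ik]]] := trace_stick c txy xyi.
have [aji [ajk [Xj ajii ajkk aji_jk]]] := trace_stick cj txy xyj.
have [aki [akj [Xk akii akjj aki_kj]]] := trace_stick ck txy xyk.
have [bij [bik [Yi bijj bikk bij_ik]]] := trace_stick c (esym txy) yxi.
have [bji [bjk [Yj bjii bjkk bji_jk]]] := trace_stick cj (esym txy) yxj.
have [bki [bkj [Yk bkii bkjj bki_kj]]] := trace_stick ck (esym txy) yxk.
have [aiji aiki] := set2_mem Xi.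
have [ajij ajkj] := set2_mem Xj.
have [akik akjk] := set2_mem Xk.
have [biji biki] := set2_mem Yi.
have [bjij bjkj] := set2_mem Yj.
have [bkik bkjk] := set2_mem Yk.
have ji : j != i by rewrite eq_sym.
have ki : k != i by rewrite eq_sym.
have kj : k != j by rewrite eq_sym.
have ebij : bij = aji := Wia_cap_eq ji bijj biji ajij ajii.
have ebik : bik = aki := Wia_cap_eq ki bikk biki akik akii.
have ebji : bji = aij := Wia_cap_eq ij bjii bjij aiji aijj.
have ebjk : bjk = akj := Wia_cap_eq kj bjkk bjkj akjk akjj.
have ebki : bki = aik := Wia_cap_eq ik bkii bkik aiki aikk.
have ebkj : bkj = ajk := Wia_cap_eq jk bkjj bkjk ajkj ajkk.
subst bij bik bji bjk bki bkj.
have := neq_Wia xyk akjk bkik; have := neq_Wia xyi aiki akii; have := neq_Wia xyi aiki ajii.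
have := neq_Wia xyi aiji akii; have := neq_Wia xyi aiji ajii; have := neq_Wia xyj ajkj aijj.
have := neq_Wia xyj ajij akjj; have := neq_Wia xyk akjk bkjk; have := neq_Wia xyk akik bkjk.
move=> *; exists aik, aij, akj, aki, aji, ajk, i, j, k; split; first by uniq_of_neqs.
split=> //; split; first by exists (coord i x); rewrite Xi setUC.
split; first by exists (coord i y); rewrite Yi setUC.
split; first by exists (coord j y).
split; first by exists (coord j x).
by split; [exists (coord k x); rewrite Xk setUC | exists (coord k y); rewrite Yk setUC].
Qed.

End Twins.

Lemma config_of_twins x y : twins x y -> bad4cycle W \/ plainhex W \/ sharkteeth W.
Proof.
case=> xy xW yW txy.
case: (boolP [exists k, coord k x == coord k y]) => [/existsP [k /eqP xyk] | ].
  have [i [j c]] := colors3_exists k.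
  have [xyi|xyi] := eqVneq (coord i x) (coord i y);
    have [xyj|xyj] := eqVneq (coord j x) (coord j y).
  - by case/eqP: xy; apply: (colors3_coord_inj c).
  - by left; apply: (bad4cycle_of_twins txy (colors3_swap c)).
  - by left; apply: (bad4cycle_of_twins txy c).
  - by right; right; apply: (sharkteeth_of_twins xW yW txy c).
rewrite negb_exists => /forallP xy_all; have [i [j c]] := colors3_exists i0.
by right; left; apply: (plainhex_of_twins txy c); apply: xy_all.
Qed.

Lemma twins_of_bad4cycle : bad4cycle W -> exists x y, twins x y.
Proof.
case=> w1 [w2 [w3 [w4 [i [j [k [U [c [[a E12] [[a' E34] [[b [w2b w3b]] [d [w4d w1d]]]]]]]]]]]]].
move: (U); rewrite /= !inE !negb_or.
move=> /andP [/and3P [w12 w13 _] /andP [/andP [w23 _] /andP [w34 _]]].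
case: (c) => ij _ ik.
have [w1a w2a] := set2_mem E12.
have [w3a' w4a'] := set2_mem E34.
have [x [xi xj xk]] := exists_vertex3 c (Wia_lt w1a) (Wia_lt w2b) (Wia_lt w1d).
have [y [yi yj yk]] := exists_vertex3 c (Wia_lt w3a') (Wia_lt w2b) (Wia_lt w1d).
have jk_cover e (u v : T) : u \in Wia j b -> v \in Wia k d ->
    Wia i e = [set u; v] -> Wia i e :|: Wia j b :|: Wia k d = Wia j b :|: Wia k d.
  move=> uj vk ->; rewrite -setUA; apply/setUidPr.
  by rewrite subUset !sub1set !in_setU uj vk orbT.
exists x, y; split.
- apply: contraTneq w3a' => xy.
  by rewrite -yi -xy xi E12 !inE negb_or !(eq_sym w3) w13 w23.
- apply/negP => xW; move/eqP: w12; apply.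
  rewrite (Wia_cap_eq ik w1a w1d (Wia_self xW xi) (Wia_self xW xk)).
  by rewrite (Wia_cap_eq ij w2a w2b (Wia_self xW xi) (Wia_self xW xj)).
- apply/negP => yW; move/eqP: w34; apply.
  rewrite (Wia_cap_eq ij w3a' w3b (Wia_self yW yi) (Wia_self yW yj)).
  by rewrite (Wia_cap_eq ik w4a' w4d (Wia_self yW yi) (Wia_self yW yk)).
- rewrite !(trace3 _ c) xi xj xk yi yj yk.
  by rewrite (jk_cover a _ _ w2b w1d) ?(jk_cover a' _ _ w3b w4d) // E12 setUC.
Qed.

Lemma twins_of_plainhex : plainhex W -> exists x y, twins x y.
Proof.
case=> w1 [w2 [w3 [w4 [w5 [w6 [i [j [k [U [c
  [[a1 E12] [[a2 E45] [[b1 E23] [[b2 E56] [[c1 E34] [c2 E61]]]]]]]]]]]]]]]].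
have w1a1 : w1 \in Wia i a1 by rewrite E12 set21.
have w4a2 : w4 \in Wia i a2 by rewrite E45 set21.
have w2b1 : w2 \in Wia j b1 by rewrite E23 set21.
have w5b2 : w5 \in Wia j b2 by rewrite E56 set21.
have w3c1 : w3 \in Wia k c1 by rewrite E34 set21.
have w6c2 : w6 \in Wia k c2 by rewrite E61 set21.
have [x [xi xj xk]] := exists_vertex3 c (Wia_lt w1a1) (Wia_lt w5b2) (Wia_lt w3c1).
have [y [yi yj yk]] := exists_vertex3 c (Wia_lt w4a2) (Wia_lt w2b1) (Wia_lt w6c2).
exists x, y; split.
- apply: contraTneq w4a2 => xy; rewrite -yi -xy xi E12 !inE.
  by apply/negP => /orP [] /eqP e; uniq_clash U e.
- apply/negP => xW; have := Wia_self xW xi; have := Wia_self xW xj.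
  by rewrite E12 E56 !inE => /orP [] /eqP -> /orP [] /eqP e; uniq_clash U e.
- apply/negP => yW; have := Wia_self yW yi; have := Wia_self yW yj.
  by rewrite E45 E23 !inE => /orP [] /eqP -> /orP [] /eqP e; uniq_clash U e.
- rewrite !(trace3 _ c) xi xj xk yi yj yk E12 E56 E34 E45 E23 E61.
  apply/setP => w; rewrite !inE.
  by case: (w == w1) (w == w2) (w == w3) (w == w4) (w == w5) (w == w6) => [] [] [] [] [] [].
Qed.

Lemma twins_of_sharkteeth : sharkteeth W -> exists x y, twins x y.
Proof.
case=> w1 [w2 [w3 [u1 [u2 [u3 [i [j [k [[_ [c [[a1 E12] [[b1 E23] _]]]]
  [[_ [_ [[a2 F12] [[b2 F23] _]]]] [U [a [_ [w1a w3a u1a u3a]]]]]]]]]]]]]].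
have w1a1 : w1 \in Wia i a1 by rewrite E12 set21.
have u1a2 : u1 \in Wia i a2 by rewrite F12 set21.
have w2b1 : w2 \in Wia j b1 by rewrite E23 set21.
have u2b2 : u2 \in Wia j b2 by rewrite F23 set21.
have [x [xi xj xk]] := exists_vertex3 c (Wia_lt w1a1) (Wia_lt u2b2) (Wia_lt w1a).
have [y [yi yj yk]] := exists_vertex3 c (Wia_lt u1a2) (Wia_lt w2b1) (Wia_lt w1a).
exists x, y; split.
- apply: contraTneq u1a2 => xy; rewrite -yi -xy xi E12 !inE.
  by apply/negP => /orP [] /eqP e; uniq_clash U e.
- apply/negP => xW; have := Wia_self xW xi; have := Wia_self xW xj.
  by rewrite E12 F23 !inE => /orP [] /eqP -> /orP [] /eqP e; uniq_clash U e.
- apply/negP => yW; have := Wia_self yW yi; have := Wia_self yW yj.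
  by rewrite F12 E23 !inE => /orP [] /eqP -> /orP [] /eqP e; uniq_clash U e.
- rewrite !(trace3 _ c) xi xj xk yi yj yk E12 F23 F12 E23.
  apply/setP => w; rewrite !in_setU; have [wk | wk] := boolP (w \in Wia k a).
    by rewrite !orbT.
  have wk' v : v \in Wia k a -> (w == v) = false.
    by move=> vk; apply: contraNF wk => /eqP ->.
  by rewrite !inE (wk' _ w1a) (wk' _ w3a) (wk' _ u1a) (wk' _ u3a) /= !orbF orbC.
Qed.

End Landmarks.

Theorem mainTheorem2 (n1 n2 n3 : nat) :
  3 <= n1 -> 3 <= n2 -> n1 <= n3 -> n2 <= n3 ->
  forall W : {set KV n1 n2 n3}, basic_landmark W ->
    (resolving W <-> (~ bad4cycle W /\ ~ plainhex W /\ ~ sharkteeth W)).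
Proof.
move=> n1_gt2 n2_gt2 n1_le_n3 _ W [_ Wia_card2 Wia_cap].
rewrite (resolvingP W n1_gt2 n2_gt2 (leq_trans n1_gt2 n1_le_n3)).
split=> [notwins | [no_bad4 [no_hex no_shark]] x y /(config_of_twins Wia_cap Wia_card2)].
  split; first by case/(twins_of_bad4cycle Wia_cap) => x [y /notwins].
  split; first by case/twins_of_plainhex => x [y /notwins].
  by case/twins_of_sharkteeth => x [y /notwins].
by case=> [|[]].
Qed.
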